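(* Let $A=(A_1,\dots,A_d)$ take values in $\{0,1\}^d$ with probabilities $p(a)>0$ for all $a$. For each nonempty $b\subseteq V=\{1,\dots,d\}$ let $p_b$ be the marginal distribution of $(A_v)_{v\in b}$ and define the multivariate logistic parameter $$\eta_b = 2^{-|b|}\sum_{a_b\in\{0,1\}^{|b|}} (-1)^{\sum_{v\in b}a_v}\log p_b(a_b),$$ i.e. the highest-order log-linear interaction (in effect coding) of the marginal distribution of $(A_v)_{v\in b}$. Then $p$ is palindromic, i.e. $p(a)=p(\sim a)$ for all $a$, if and only if $\eta_b=0$ for all $b\subseteq V$ with $|b|$ odd.
   Context: $\sim a$ denotes the complement of the binary vector $a$, i.e. $(\sim a)_v=1-a_v$. $|b|$ denotes the cardinality of the subset $b$. *)

From HB Require Import structures.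
From mathcomp Require Import all_boot all_order all_algebra.
From mathcomp Require Import reals exp.
Set Implicit Arguments. Unset Strict Implicit. Unset Printing Implicit Defensive.
Import Order.TTheory GRing.Theory Num.Theory.
Local Open Scope ring_scope.

Definition bvec (d : nat) := {ffun 'I_d -> bool}.

Definition bcompl (d : nat) (a : bvec d) : bvec d := [ffun v => ~~ a v].

Definition positive_distribution (R : realType) (d : nat) (p : bvec d -> R) :=
  (forall a, 0 < p a) /\ \sum_(a : bvec d) p a = 1.

Definition palindromic (R : realType) (d : nat) (p : bvec d -> R) :=
  forall a : bvec d, p a = p (bcompl a).

Definition marginal (R : realType) (d : nat) (p : bvec d -> R)
  (b : {set 'I_d}) (c : bvec d) : R :=
  \sum_(a : bvec d | [forall v in b, a v == c v]) p a.

(* Assignments a_b in {0,1}^b are represented canonically by the vectors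
   c with c v = false outside b. *)
Definition supported_in (d : nat) (b : {set 'I_d}) (c : bvec d) : bool :=
  [forall v, (v \notin b) ==> ~~ c v].

Definition mlogit_eta (R : realType) (d : nat) (p : bvec d -> R) (b : {set 'I_d}) : R :=
  (2 ^- #|b|) *
  \sum_(c : bvec d | supported_in b c)
     (-1) ^+ (\sum_(v in b) (c v : nat))%N * ln (marginal p b c).

From HB Require Import structures.
From mathcomp Require Import all_boot all_order all_algebra.
From mathcomp Require Import reals exp.
From mathcomp Require Import lra.
Set Implicit Arguments. Unset Strict Implicit. Unset Printing Implicit Defensive.
Import Order.TTheory GRing.Theory Num.Theory.
Local Open Scope ring_scope.

(** Write [m_b] for the marginal on [b] and [S_b] for the signed sum of
   [ln m_b] in [eta_b].  Complementing the coordinates of [b] multiplies the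
   sign by [(-1)^|b|], so [S_b] computed from [m_b(~.)] is [(-1)^|b| S_b]; for
   a palindromic [p] the two agree and [S_b = 0] whenever [|b|] is odd.
   Conversely, show by induction on [|b|] that [D_b(c) = m_b(c) - m_b(~c)]
   vanishes.  If [D] vanishes on every [b :\ v], then flipping coordinate [v]
   negates [D_b], so [sign(c) D_b(c)] is a constant [D_b(0)].  Multiplying the
   identity [sum_c sign(c) (ln m_b(c) - ln m_b(~c)) = (1 - (-1)^|b|) S_b = 0]
   by that constant gives [sum_c D_b(c) (ln m_b(c) - ln m_b(~c)) = 0], a sum of
   nonnegative terms; its term at [c = 0] forces [D_b(0) = 0].  For [b = V]
   this is palindromicity. *)

Lemma subr_mul_ln_ge0 (R : realType) (x y : R) :
  0 < x -> 0 < y -> 0 <= (x - y) * (ln x - ln y).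
Proof.
move=> x_gt0 y_gt0; have [xy | yx] := lerP x y.
  by rewrite mulr_le0 // subr_le0 // ler_ln ?posrE.
by rewrite mulr_ge0 // subr_ge0 ?ler_ln ?posrE // ltW.
Qed.

Lemma subr_mul_ln_eq0 (R : realType) (x y : R) :
  0 < x -> 0 < y -> (x - y) * (ln x - ln y) = 0 -> x = y.
Proof.
move=> x_gt0 y_gt0 /eqP; rewrite mulf_eq0 !subr_eq0 => /orP[/eqP // | /eqP lnE].
by apply: ln_inj; rewrite ?posrE.
Qed.

Lemma forall_in_setD1 (T : finType) (P : pred T) (A : {set T}) (x : T) :
  x \in A -> [forall y in A, P y] = [forall y in A :\ x, P y] && P x.
Proof.
move=> xA; apply/forallP/andP => [PA | [/forallP PAx Px] y].
  split; last exact: (implyP (PA x)).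
  by apply/forallP => y; rewrite inE; apply/implyP => /andP[_ /(implyP (PA y))].
apply/implyP => yA; case: (eqVneq y x) => [-> // | yx].
by apply: (implyP (PAx y)); rewrite !inE yx.
Qed.

Section BinaryVectors.
Variable d : nat.

Definition bzero : bvec d := [ffun=> false].

Definition bflip (v : 'I_d) (c : bvec d) : bvec d :=
  [ffun u => if u == v then ~~ c u else c u].

Definition bcompl_in (b : {set 'I_d}) (c : bvec d) : bvec d :=
  [ffun u => if u \in b then ~~ c u else c u].

Lemma bcomplK : involutive (@bcompl d).
Proof. by move=> c; apply/ffunP => u; rewrite !ffunE negbK. Qed.

Lemma bcompl_inK (b : {set 'I_d}) : involutive (bcompl_in b).
Proof. by move=> c; apply/ffunP => u; rewrite !ffunE; case: (u \in b); rewrite ?negbK. Qed.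

Lemma bcompl_bflip (v : 'I_d) (c : bvec d) : bcompl (bflip v c) = bflip v (bcompl c).
Proof. by apply/ffunP => u; rewrite !ffunE; case: (u == v). Qed.

Lemma supported_in_bcompl_in (b : {set 'I_d}) (c : bvec d) :
  supported_in b (bcompl_in b c) = supported_in b c.
Proof.
by apply/forallP/forallP => c_supp v; have := c_supp v; rewrite ffunE; case: (v \in b).
Qed.

Lemma supported_in_bzero (b : {set 'I_d}) : supported_in b bzero.
Proof. by apply/forallP => u; rewrite ffunE implybT. Qed.

Variable R : realType.

Definition bsign (b : {set 'I_d}) (c : bvec d) : R :=
  (-1) ^+ (\sum_(v in b) (c v : nat))%N.

Definition signed_log_sum (b : {set 'I_d}) (f : bvec d -> R) : R :=
  \sum_(c : bvec d | supported_in b c) bsign b c * ln (f c).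

Lemma bsign_sqr (b : {set 'I_d}) (c : bvec d) : bsign b c * bsign b c = 1.
Proof. by rewrite -exprD -signr_odd oddD addbb. Qed.

Lemma bsign_neq0 (b : {set 'I_d}) (c : bvec d) : bsign b c != 0.
Proof. by apply: contra_eq_neq (bsign_sqr b c) => ->; rewrite mul0r eq_sym oner_eq0. Qed.

Lemma bsign_bcompl_in (b : {set 'I_d}) (c : bvec d) :
  bsign b (bcompl_in b c) = (-1) ^+ #|b| * bsign b c.
Proof.
have card_split : (\sum_(v in b) (bcompl_in b c v : nat) + \sum_(v in b) (c v : nat))%N = #|b|.
  rewrite -big_split -sum1_card; apply: eq_bigr => v vb.
  by rewrite ffunE vb; case: (c v).
have -> : (-1) ^+ #|b| = bsign b (bcompl_in b c) * bsign b c by rewrite -exprD card_split.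
by rewrite -mulrA bsign_sqr mulr1.
Qed.

Lemma bsign_bflip (b : {set 'I_d}) (v : 'I_d) (c : bvec d) :
  v \in b -> bsign b (bflip v c) = - bsign b c.
Proof.
move=> vb; rewrite /bsign !(bigD1 v vb) /= ffunE eqxx.
rewrite (eq_bigr (fun u => c u : nat)) => [|u /andP[_ uv]]; last by rewrite ffunE (negbTE uv).
by case: (c v); rewrite /= ?add0n ?exprS ?mulN1r ?opprK.
Qed.

End BinaryVectors.

Section Marginals.
Variables (R : realType) (d : nat) (p : bvec d -> R).

Lemma eq_marginal (b : {set 'I_d}) (c c' : bvec d) :
  {in b, c =1 c'} -> marginal p b c = marginal p b c'.
Proof.
move=> cc'; apply: eq_bigl => a; apply/forallP/forallP => /= ac v;
  by apply/implyP => vb; have := implyP (ac v) vb; rewrite cc'.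
Qed.

Lemma marginal_gt0 (b : {set 'I_d}) (c : bvec d) :
  (forall a, 0 < p a) -> 0 < marginal p b c.
Proof.
move=> p_gt0; rewrite /marginal (bigD1 c) /=; last by apply/forallP => u; apply/implyP.
by rewrite ltr_pwDl // sumr_ge0 // => a _; rewrite ltW.
Qed.

Lemma marginal_setT (c : bvec d) : marginal p setT c = p c.
Proof.
rewrite /marginal (big_pred1 c) // => a /=.
apply/forallP/eqP => [ac | ->]; last by move=> u; apply/implyP.
by apply/ffunP => u; apply/eqP; apply: (implyP (ac u)); rewrite inE.
Qed.

Lemma marginalD1 (b : {set 'I_d}) (v : 'I_d) (c : bvec d) : v \in b ->
  marginal p (b :\ v) c = marginal p b c + marginal p b (bflip v c).
Proof.
move=> vb; rewrite /marginal (bigID (fun a : bvec d => a v == c v)) /=.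
congr (_ + _); apply: eq_bigl => a; rewrite (forall_in_setD1 _ vb) //.
rewrite [in RHS]ffunE eqxx; congr (_ && _); last by case: (a v); case: (c v).
by apply: eq_forallb => u; rewrite !inE ffunE; case: eqP.
Qed.

Lemma marginal_bcompl (b : {set 'I_d}) (c : bvec d) :
  palindromic p -> marginal p b (bcompl c) = marginal p b c.
Proof.
move=> pal; rewrite /marginal (reindex_inj (can_inj (@bcomplK d))) /=.
apply: eq_big => [a | a _]; last by rewrite -pal.
by apply/forallP/forallP => ac u; have := ac u; rewrite !ffunE !(inj_eq negb_inj).
Qed.

Lemma mlogit_etaE (b : {set 'I_d}) :
  mlogit_eta p b = 2 ^- #|b| * signed_log_sum b (marginal p b).
Proof. by []. Qed.

Lemma signed_log_sum_bcompl (b : {set 'I_d}) :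
  signed_log_sum b (marginal p b \o @bcompl d)
  = (-1) ^+ #|b| * signed_log_sum b (marginal p b).
Proof.
rewrite /signed_log_sum (reindex_inj (can_inj (bcompl_inK b))) /= mulr_sumr.
apply: eq_big => [c | c _]; first by rewrite supported_in_bcompl_in.
rewrite bsign_bcompl_in -mulrA; congr (_ * (_ * ln _)).
by apply: eq_marginal => v vb; rewrite !ffunE vb negbK.
Qed.

Lemma palindromic_signed_log_sum_eq0 (b : {set 'I_d}) :
  palindromic p -> odd #|b| -> signed_log_sum b (marginal p b) = 0.
Proof.
move=> pal odd_b; have := signed_log_sum_bcompl b.
have -> : signed_log_sum b (marginal p b \o @bcompl d) = signed_log_sum b (marginal p b).
  by apply: eq_bigr => c _; rewrite /= marginal_bcompl.
rewrite -signr_odd odd_b expr1; lra.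
Qed.

Definition marginal_asym (b : {set 'I_d}) (c : bvec d) : R :=
  marginal p b c - marginal p b (bcompl c).

Section Induction.
Variable b : {set 'I_d}.
Hypothesis asym_subset : forall v, v \in b -> marginal_asym (b :\ v) =1 (fun=> 0).

Lemma marginal_asym_bflip (v : 'I_d) (c : bvec d) : v \in b ->
  marginal_asym b (bflip v c) = - marginal_asym b c.
Proof.
move=> vb; have := asym_subset vb c.
rewrite /marginal_asym !marginalD1 // bcompl_bflip; lra.
Qed.

Lemma bsign_marginal_asym (c : bvec d) :
  bsign R b c * marginal_asym b c = marginal_asym b (bzero d).
Proof.
move En : (\sum_(v in b) (c v : nat))%N => n; elim: n c En => [|n IHn] c En.
  have c_off_b : {in b, c =1 bzero d}.
    move=> v vb; move/eqP: En; rewrite sum_nat_eq0 => /forallP/(_ v).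
    by rewrite vb ffunE; case: (c v).
  rewrite /bsign En expr0 mul1r /marginal_asym (eq_marginal c_off_b).
  by congr (_ - _); apply: eq_marginal => v vb; rewrite !ffunE c_off_b // ffunE.
have [v /andP[vb cv] | c_off_b] := pickP [pred v | (v \in b) && c v]; last first.
  by move: En; rewrite big1 // => v vb; move: (c_off_b v); rewrite /= vb; case: (c v).
have En' : (\sum_(u in b) (bflip v c u : nat))%N = n.
  move: En; rewrite !(bigD1 v vb) /= ffunE eqxx cv add1n => -[<-].
  by apply: eq_bigr => u /andP[_ uv]; rewrite ffunE (negbTE uv).
by rewrite -(IHn _ En') bsign_bflip // marginal_asym_bflip // mulrNN.
Qed.

Lemma marginal_asym_eq0 : (forall a, 0 < p a) ->
  (odd #|b| -> signed_log_sum b (marginal p b) = 0) -> marginal_asym b =1 (fun=> 0).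
Proof.
move=> p_gt0 odd_sum0.
pose dlog c := ln (marginal p b c) - ln (marginal p b (bcompl c)).
have signed_dlog0 : \sum_(c : bvec d | supported_in b c) bsign R b c * dlog c = 0.
  rewrite (eq_bigr _ (fun c _ => mulrBr _ _ _)) sumrB.
  rewrite -[X in _ - X]/(signed_log_sum b (marginal p b \o @bcompl d)).
  rewrite -/(signed_log_sum b (marginal p b)) signed_log_sum_bcompl -signr_odd.
  by case: (boolP (odd #|b|)) => [/odd_sum0 -> | _]; rewrite ?mulr0 ?mul1r subrr.
have asym_dlog0 : \sum_(c : bvec d | supported_in b c) marginal_asym b c * dlog c = 0.
  rewrite -[RHS](mulr0 (marginal_asym b (bzero d))) -[in RHS]signed_dlog0 mulr_sumr.
  by apply: eq_bigr => c _; rewrite -(bsign_marginal_asym c) mulrACA bsign_sqr mul1r.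
have asym_bzero0 : marginal_asym b (bzero d) = 0.
  apply/eqP; rewrite subr_eq0; apply/eqP; apply: subr_mul_ln_eq0; rewrite ?marginal_gt0 //.
  apply: (psumr_eq0P _ asym_dlog0) (supported_in_bzero b) => c _.
  by apply: subr_mul_ln_ge0; apply: marginal_gt0.
move=> c; apply/eqP; rewrite -(mulIr_eq0 _ (mulIf (bsign_neq0 R b c))) mulrC.
by rewrite bsign_marginal_asym asym_bzero0.
Qed.

End Induction.

End Marginals.

Theorem proposition2p3 (R : realType) (d : nat) (p : bvec d -> R)
  (hp : positive_distribution p) :
  palindromic p <-> (forall b : {set 'I_d}, odd #|b| -> mlogit_eta p b = 0).
Proof.
have [p_gt0 _] := hp; split => [pal b odd_b | eta0].
  by rewrite mlogit_etaE (palindromic_signed_log_sum_eq0 pal odd_b) mulr0.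
have asym0 n (b : {set 'I_d}) : (#|b| < n)%N -> marginal_asym p b =1 (fun=> 0).
  elim: n b => [//|n IHn] b card_b; apply: marginal_asym_eq0 => // [v vb | odd_b].
    by apply: IHn; rewrite (cardsD1 v b) vb in card_b.
  move/eqP: (eta0 b odd_b); rewrite mlogit_etaE mulf_eq0 invr_eq0 expf_eq0 pnatr_eq0.
  by rewrite andbF => /eqP.
move=> a; have /eqP := asym0 _ [set: 'I_d] (ltnSn _) a.
by rewrite /marginal_asym !marginal_setT subr_eq0 => /eqP.
Qed.
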